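(* Let $X$ be a complete nonsingular toric variety which is Fano and all of whose toric subvarieties are Fano. If a ray generator $\rho$ of the fan of $X$ is equal to a nonnegative linear combination of ray generators other than $\rho$, then the toric divisor $D$ associated to $\rho$ is exceptional.
   Context: For such $X$ (fan $\Delta$ in $N_{\mathbb R}$, ray generators $\rho$ corresponding to toric divisors $D$), a primitive set is a set $\{D_1,\ldots,D_k\}$ of toric divisors with empty intersection such that every proper subset has nonempty intersection (equivalently, $\rho_1,\ldots,\rho_k$ do not span a cone but every proper subset does). For these $X$, every primitive set satisfies either $\rho_1+\cdots+\rho_k=0$ or $\rho_1+\cdots+\rho_k=\widehat\rho$ for a ray generator $\widehat\rho$. A toric divisor $\widehat D$ is called exceptional if $\rho_1+\cdots+\rho_k=\widehat\rho$ for some primitive set $\{D_1,\ldots,D_k\}$. *)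

From HB Require Import structures.
From mathcomp Require Import all_boot all_order all_algebra.
From mathcomp Require Import reals.
Set Implicit Arguments. Unset Strict Implicit. Unset Printing Implicit Defensive.
Import Order.TTheory GRing.Theory Num.Theory.
Local Open Scope ring_scope.

(* A fan in N = Z^n: rays indexed by a finite type I, with ray generators
   u i : 'rV[int]_n, and a family of cones, each cone being given by the set
   of rays it contains (smooth cones are simplicial). *)

Section Toric.
Variables (R : realType) (n : nat) (I : finType) (u : I -> 'rV[int]_n).

Definition ur (i : I) : 'rV[R]_n := map_mx intr (u i).

Definition pair (m x : 'rV[R]_n) : R := (m *m x^T) 0 0.

Definition pos_cone (S : {set I}) (x : 'rV[R]_n) : Prop :=
  exists c : I -> R, (forall i, 0 <= c i) /\ x = \sum_(i in S) c i *: ur i.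

Definition Zbasis (S : {set I}) : Prop :=
  (forall v : 'rV[int]_n, exists c : I -> int, v = \sum_(i in S) c i *: u i) /\
  (forall c : I -> int, \sum_(i in S) c i *: u i = 0 -> forall i, i \in S -> c i = 0).

Definition smooth_complete_fan (cones : {set {set I}}) : Prop :=
  (forall i, [set i] \in cones) /\
  (forall S T : {set I}, T \in cones -> S \subset T -> S \in cones) /\
  (forall S T : {set I}, S \in cones -> T \in cones -> forall x,
      (pos_cone S x /\ pos_cone T x) <-> pos_cone (S :&: T) x) /\
  (forall S : {set I}, S \in cones -> exists2 T : {set I}, T \in cones & S \subset T /\ Zbasis T) /\
  (forall x : 'rV[R]_n, exists2 S : {set I}, S \in cones & pos_cone S x).

Definition maximal_cone (cones : {set {set I}}) (S : {set I}) : bool :=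
  (S \in cones) && [forall T in cones, (S \subset T) ==> (T == S)].

(* The orbit closure V(tau) is Fano: its anticanonical divisor (sum of all its
   toric divisors) is ample, expressed via the toric ampleness criterion
   (strict convexity of the support function) on the star fan of tau in
   N / N_tau.  Linear functionals on (N/N_tau)_R are functionals on N_R
   vanishing on the rays of tau; the rays of Star(tau) are the images of the
   rays i with tau + {i} a cone, i not in tau; the maximal cones of Star(tau)
   are the images of maximal cones sigma containing tau. *)
Definition orbit_closure_Fano (cones : {set {set I}}) (tau : {set I}) : Prop :=
  forall sigma : {set I}, maximal_cone cones sigma -> tau \subset sigma ->
    exists m : 'rV[R]_n,
      (forall i, i \in tau -> pair m (ur i) = 0) /\
      (forall i, i \in sigma -> i \notin tau -> pair m (ur i) = 1) /\
      (forall i, i |: tau \in cones -> i \notin sigma -> pair m (ur i) < 1).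

Definition Fano (cones : {set {set I}}) : Prop := orbit_closure_Fano cones set0.

Definition all_toric_subvarieties_Fano (cones : {set {set I}}) : Prop :=
  forall tau : {set I}, tau \in cones -> orbit_closure_Fano cones tau.

End Toric.

(* primitive set: the divisors have empty intersection (P is not a cone) but
   every proper subset has nonempty intersection (is a cone) *)
Definition primitive_set (I : finType) (cones : {set {set I}}) (P : {set I}) : Prop :=
  P \notin cones /\ forall Q : {set I}, Q \proper P -> Q \in cones.

Definition exceptional (n : nat) (I : finType) (u : I -> 'rV[int]_n)
    (cones : {set {set I}}) (j : I) : Prop :=
  exists P : {set I}, primitive_set cones P /\ \sum_(i in P) u i = u j.

From HB Require Import structures.
From mathcomp Require Import all_boot all_order all_algebra.
From mathcomp Require Import reals.
From mathcomp Require Import zify.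
From Stdlib Require Import Classical.
Import Order.TTheory GRing.Theory Num.Theory.
Local Open Scope ring_scope.
Set Implicit Arguments. Unset Strict Implicit. Unset Printing Implicit Defensive.

(* By Caratheodory's theorem, u_j is a nonnegative combination of
   linearly independent rays; as all ray generators are integral, the
   coefficients are rational, and clearing denominators gives a relation
   N u_j = sum_i m_i u_i with m_i in N and m_j = 0.  The support of m is not a
   cone (no cone avoiding j contains a positive multiple of u_j), so it contains
   a primitive set Q.  Since every V(tau) is Fano, sum_Q u_i is 0 or a single
   ray generator u_y: writing it in the lattice basis of a maximal cone s, the
   Fano inequalities of the orbit closures V(Q :&: s) (or V((Q :&: s) :\ p))
   force its nonnegative integral coordinates to sum to at most 1.  If y = j,
   then Q makes D_j exceptional; otherwise replacing the rays of Q by the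
   right-hand side of the primitive relation decreases sum_i m_i, since
   #|Q| >= 2, and we conclude by induction. *)

Section LinearIndependence.
Variables (R : pzRingType) (V : lmodType R) (I : finType) (v : I -> V).

Definition lin_indep_on (S : {set I}) : Prop :=
  forall d : I -> R, \sum_(i in S) d i *: v i = 0 -> forall i, i \in S -> d i = 0.

Lemma lin_indep_coord_uniq (S : {set I}) (c c' : I -> R) : lin_indep_on S ->
  \sum_(i in S) c i *: v i = \sum_(i in S) c' i *: v i -> forall i, i \in S -> c i = c' i.
Proof.
move=> indS E i iS; apply/eqP; rewrite -subr_eq0; apply/eqP.
apply: (indS (fun i => c i - c' i)) => //.
by under eq_bigr => k _ do rewrite scalerBl; rewrite sumrB E subrr.
Qed.

Lemma sum_delta_scale (P : pred I) p : P p ->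
  \sum_(i | P i) (i == p)%:R *: v i = v p.
Proof.
move=> Pp; rewrite (bigD1 p) //= eqxx scale1r big1 ?addr0 // => i /andP[_ /negbTE ->].
by rewrite scale0r.
Qed.

End LinearIndependence.

Section Caratheodory.
Variables (R : realFieldType) (V : lmodType R) (I : finType) (v : I -> V).

Definition supp (c : I -> R) : {set I} := [set i | c i != 0].

Lemma sum_supp (c : I -> R) : \sum_(i in supp c) c i *: v i = \sum_i c i *: v i.
Proof.
rewrite [RHS](bigID (mem (supp c))) /= [X in _ + X]big1 ?addr0 // => i.
by rewrite inE negbK => /eqP ->; rewrite scale0r.
Qed.

Lemma lin_dep_pos (S : {set I}) : ~ lin_indep_on v S ->
  exists2 d : I -> R, \sum_(i in S) d i *: v i = 0 & exists2 i, i \in S & 0 < d i.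
Proof.
move=> depS; apply: NNPP => noPos; apply: depS => d d0 i iS; apply: NNPP => di.
case: (ltrgt0P (d i)) => [dpos|dneg|//]; apply: noPos.
  by exists d => //; exists i.
exists (fun i => - d i); last by exists i; rewrite ?oppr_gt0.
by under eq_bigr => k _ do rewrite scaleNr; rewrite sumrN d0 oppr0.
Qed.

(* Move along a dependency [d] of the support until the first coefficient,
   the one minimising [c i / d i] over [d i > 0], vanishes. *)
Lemma conic_supp_shrink (c : I -> R) : (forall i, 0 <= c i) ->
  ~ lin_indep_on v (supp c) ->
  exists c' : I -> R, [/\ forall i, 0 <= c' i, supp c' \proper supp c &
    \sum_i c' i *: v i = \sum_i c i *: v i].
Proof.
move=> c_ge0 /lin_dep_pos [d0 d0_rel [i0 i0S d0i0]].
pose d i := if i \in supp c then d0 i else 0.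
have d_out i : i \notin supp c -> d i = 0 by rewrite /d => /negbTE ->.
have di0 : 0 < d i0 by rewrite /d i0S.
have [p dp p_min] : exists2 p, 0 < d p & forall i, 0 < d i -> c p / d p <= c i / d i.
  by case: (arg_minP (fun i => c i / d i) (P := fun i => 0 < d i) di0) => p; exists p.
pose c' i := c i - c p / d p * d i.
have pS : p \in supp c by apply: contraLR dp => /d_out ->; rewrite ltxx.
exists c'; split.
- move=> i; rewrite subr_ge0; case: (ltP 0 (d i)) => [di|di].
    by rewrite -ler_pdivlMr // p_min.
  apply: (le_trans _ (c_ge0 i)); exact: mulr_ge0_le0 (divr_ge0 (c_ge0 p) (ltW dp)) di.
- rewrite properE; apply/andP; split.
    apply/subsetP => i; rewrite !inE; apply: contraNneq => ci0.
    by rewrite /c' ci0 (d_out i) ?mulr0 ?subrr // inE ci0 eqxx.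
  by apply/subsetPn; exists p; rewrite // !inE /c' divfK ?subrr ?eqxx // lt0r_neq0.
- have d_rel : \sum_i d i *: v i = 0.
    rewrite -[RHS]d0_rel [RHS]big_mkcond; apply: eq_bigr => i _.
    by rewrite /d; case: ifP; rewrite ?scale0r.
  under eq_bigr => i _ do rewrite /c' scalerBl -scalerA.
  by rewrite sumrB -scaler_sumr d_rel scaler0 subr0.
Qed.

Lemma conic_caratheodory (c : I -> R) : (forall i, 0 <= c i) ->
  exists c' : I -> R, [/\ forall i, 0 <= c' i, supp c' \subset supp c,
    \sum_i c' i *: v i = \sum_i c i *: v i & lin_indep_on v (supp c')].
Proof.
elim: {c}_.+1 {-2}c (ltnSn #|supp c|) => // k IH c lt_k c_ge0.
have [indep|dep] := classic (lin_indep_on v (supp c)); first by exists c.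
have [c1 [c1_ge0 sub1 E1]] := conic_supp_shrink c_ge0 dep.
have lt1 : (#|supp c1| < k)%N by apply: leq_trans (proper_card sub1) _.
have [c2 [c2_ge0 sub2 E2 indep2]] := IH c1 lt1 c1_ge0.
by exists c2; rewrite E2 E1; split => //; apply: subset_trans sub2 (proper_sub sub1).
Qed.

End Caratheodory.

Section RationalCoordinates.
Variables (R : numFieldType) (n : nat) (I : finType) (v : I -> 'rV[int]_n).

Let vR i : 'rV[R]_n := map_mx intr (v i).

Lemma map_mx_ratr_int (w : 'rV[int]_n) :
  map_mx ratr (map_mx intr w : 'rV[rat]_n) = map_mx intr w :> 'rV[R]_n.
Proof. by apply/rowP => l; rewrite !mxE ratr_int. Qed.

(* A linear system with integral data and a unique solution has a rational
   solution, hence only a rational one: solve it over [rat] with [pinvmx]. *)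
Lemma lin_indep_coord_rat (S : {set I}) (w : 'rV[int]_n) (c : I -> R) :
  lin_indep_on vR S -> map_mx intr w = \sum_(i in S) c i *: vR i ->
  exists q : I -> rat, forall i, i \in S -> c i = ratr (q i).
Proof.
move=> indS wE.
pose A : 'M[rat]_(#|I|, n) :=
  \matrix_k (if enum_val k \in S then map_mx intr (v (enum_val k)) else 0).
have AE (x : 'rV[R]_#|I|) :
    x *m map_mx ratr A = \sum_(i in S) x 0 (enum_rank i) *: vR i.
  rewrite mulmx_sum_row (reindex enum_rank) /=; last first.
    by exists enum_val => i _; rewrite ?enum_rankK ?enum_valK.
  rewrite [RHS]big_mkcond /=; apply: eq_bigr => i _.
  rewrite -map_row rowK enum_rankK; case: ifP => _; last by rewrite raddf0 scaler0.
  by rewrite map_mx_ratr_int.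
pose wQ : 'rV[rat]_n := map_mx intr w.
have wA : (map_mx ratr wQ <= map_mx (ratr : rat -> R) A)%MS.
  apply/submxP; exists (\row_k c (enum_val k)).
  by rewrite AE map_mx_ratr_int wE; apply: eq_bigr => i _; rewrite mxE enum_rankK.
pose q i := (wQ *m pinvmx A) 0 (enum_rank i).
exists q => i iS; apply: (lin_indep_coord_uniq (c' := ratr \o q) indS) iS.
rewrite -wE -map_mx_ratr_int -/wQ -(mulmxKpV wA) -map_pinvmx -map_mxM AE.
by apply: eq_bigr => k _; rewrite mxE.
Qed.

End RationalCoordinates.

Lemma rat_common_denom (I : finType) (q : I -> rat) : (forall i, 0 <= q i) ->
  exists N : nat, exists m : I -> nat, (0 < N)%N /\ forall i, N%:R * q i = (m i)%:R.
Proof.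
move=> q_ge0; pose D := \prod_i denq (q i).
pose D' i := \prod_(k | k != i) denq (q k).
have D'_gt0 i : 0 < D' i by apply: prodr_gt0 => k _; apply: denq_gt0.
have D_gt0 : 0 < D by apply: prodr_gt0 => k _; apply: denq_gt0.
exists (absz D), (fun i => absz (numq (q i) * D' i)).
split=> [|i]; first by rewrite absz_gt0 gt_eqF.
rewrite !natr_absz gtr0_norm // ger0_norm; last first.
  by rewrite mulr_ge0 ?numq_ge0 ?q_ge0 ?ltW.
by rewrite /D (bigD1 i) //= -/(D' i) !intrM mulrAC [_ * q i]mulrC -numqE.
Qed.

Lemma sum_mem_card (I : finType) (Q : {set I}) : (\sum_i (i \in Q : nat))%N = #|Q|.
Proof. by rewrite -sum1_card [RHS]big_mkcond; apply: eq_bigr => i _; case: (i \in Q). Qed.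

Lemma int_sum_le1 (J : finType) (S : {set J}) (a : J -> int) :
  (forall t, t \in S -> 0 <= a t) -> \sum_(t in S) a t <= 1 ->
  (forall t, t \in S -> a t = 0) \/
  exists2 y, y \in S & forall t, t \in S -> a t = (t == y)%:R.
Proof.
move=> a_ge0 sum_le1.
have [y /andP[yS ay]|a0] := pickP [pred t | (t \in S) && (a t != 0)]; last first.
  by left => t tS; apply/eqP; have := a0 t; rewrite /= tS => /negbFE.
right; exists y => // t tS.
rewrite (bigD1 y) //= in sum_le1; set r := (X in _ + X) in sum_le1.
have r_ge0 : 0 <= r by apply: sumr_ge0 => k /andP[/a_ge0].
have y1 : a y = 1 by have := a_ge0 y yS; lia.
have r0 : r = 0 by lia.
have [->|ty] := eqVneq t y; first by rewrite y1.
by rewrite (psumr_eq0P _ r0) ?tS // => k /andP[/a_ge0].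
Qed.

Lemma primitive_subset_exists (I : finType) (cones : {set {set I}}) (S : {set I}) :
  S \notin cones -> exists2 Q : {set I}, Q \subset S & primitive_set cones Q.
Proof.
move=> Sn; pose P (Q : {set I}) := (Q \subset S) && (Q \notin cones).
have PS : P S by rewrite /P subxx.
have [Q /andP[QS Qn] Q_min] := arg_minnP (fun Q : {set I} => #|Q|) PS.
exists Q => //; split => // Q' Q'Q; apply: contraT => Q'n.
have := Q_min Q'; rewrite /P (subset_trans (proper_sub Q'Q) QS) Q'n => /(_ isT).
by rewrite leqNgt proper_card.
Qed.

Lemma maximal_cone_exists (I : finType) (cones : {set {set I}}) (S : {set I}) :
  S \in cones -> exists2 s, maximal_cone cones s & S \subset s.
Proof.
move=> Sc; pose P (T : {set I}) := (T \in cones) && (S \subset T).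
have PS : P S by rewrite /P Sc subxx.
have [s /andP[sc Ss] s_max] := arg_maxnP (fun T : {set I} => #|T|) PS.
exists s => //; rewrite /maximal_cone sc; apply/forall_inP => T Tc; apply/implyP => sT.
by rewrite eq_sym eqEcard sT; apply: s_max; rewrite /P Tc (subset_trans Ss sT).
Qed.

Section Lattice.
Variables (R : realType) (n : nat) (I : finType) (u : I -> 'rV[int]_n).
Local Notation ur := (ur R u).

Lemma urE i l : ur i 0 l = (u i 0 l)%:~R.
Proof. by rewrite mxE. Qed.

Lemma pairE (m x : 'rV[R]_n) : pair m x = \sum_l m 0 l * x 0 l.
Proof. by rewrite /pair !mxE; apply: eq_bigr => l _; rewrite mxE. Qed.

Lemma pair0 (m : 'rV[R]_n) : pair m 0 = 0.
Proof. by rewrite /pair trmx0 mulmx0 mxE. Qed.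

Lemma pairD (m x y : 'rV[R]_n) : pair m (x + y) = pair m x + pair m y.
Proof. by rewrite /pair linearD mulmxDr mxE. Qed.

Lemma pairZ (m : 'rV[R]_n) a x : pair m (a *: x) = a * pair m x.
Proof. by rewrite /pair linearZ -scalemxAr mxE. Qed.

Lemma pair_sum (m : 'rV[R]_n) (J : Type) (r : seq J) (P : pred J) (F : J -> 'rV[R]_n) :
  pair m (\sum_(j <- r | P j) F j) = \sum_(j <- r | P j) pair m (F j).
Proof. exact: (big_morph _ (pairD m) (pair0 m)). Qed.

Lemma map_intr_comb (S : {set I}) (c : I -> int) :
  map_mx intr (\sum_(i in S) c i *: u i) = \sum_(i in S) (c i)%:~R *: ur i :> 'rV[R]_n.
Proof.
by rewrite raddf_sum; apply: eq_bigr => i _; apply/rowP => l; rewrite !mxE -intrM.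
Qed.

Lemma map_mx_intr_inj : injective (map_mx intr : 'rV[int]_n -> 'rV[R]_n).
Proof.
by move=> x y /rowP E; apply/rowP => l; have := E l; rewrite !mxE; apply: intr_inj.
Qed.

Lemma ur_sum_inj (S : {set I}) j : \sum_(i in S) ur i = ur j -> \sum_(i in S) u i = u j.
Proof. by rewrite -raddf_sum; apply: map_mx_intr_inj. Qed.

Lemma Zbasis_dual (T : {set I}) : Zbasis u T ->
  exists lam : I -> 'rV[R]_n, exists z : I -> I -> int,
  [/\ forall t i, pair (lam t) (ur i) = (z t i)%:~R,
      forall t t', t \in T -> t' \in T -> z t t' = (t == t')%:R &
      forall x, x = \sum_(t in T) pair (lam t) x *: ur t].
Proof.
case=> spanT indT.
have [f fE] : exists f : 'I_n -> I -> int,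
    forall l, delta_mx 0 l = \sum_(i in T) f l i *: u i.
  exact: fin_all_exists (fun l => spanT (delta_mx 0 l)).
pose lam t : 'rV[R]_n := \row_l (f l t)%:~R.
pose z t i := \sum_l f l t * u i 0 l.
have lamE t i : pair (lam t) (ur i) = (z t i)%:~R.
  by rewrite pairE rmorph_sum; apply: eq_bigr => l _; rewrite mxE urE -intrM.
have expand x : x = \sum_(t in T) pair (lam t) x *: ur t.
  rewrite {1}[x]row_sum_delta.
  under eq_bigr => l _ do rewrite -(map_delta_mx intr) fE map_intr_comb scaler_sumr.
  rewrite exchange_big /=; apply: eq_bigr => t _.
  by rewrite pairE scaler_suml; apply: eq_bigr => l _; rewrite scalerA mxE mulrC.
exists lam, z; split => // t t' tT t'T.
have ut' : u t' = \sum_(i in T) z i t' *: u i.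
  apply: map_mx_intr_inj; rewrite map_intr_comb [LHS]expand.
  by apply: eq_bigr => i _; rewrite lamE.
apply: (lin_indep_coord_uniq (c := z^~ t') (c' := fun i => (i == t')%:R) indT) tT.
by rewrite -ut' sum_delta_scale.
Qed.

Lemma pos_cone_sum (S : {set I}) (c : I -> R) : (forall i, i \in S -> 0 <= c i) ->
  pos_cone u S (\sum_(i in S) c i *: ur i).
Proof.
move=> c_ge0; exists (fun i => if i \in S then c i else 0); split.
  by move=> i; case: ifP => // /c_ge0.
by apply: eq_bigr => i ->.
Qed.

Lemma pos_cone_sub (S T : {set I}) (x : 'rV[R]_n) :
  S \subset T -> pos_cone u S x -> pos_cone u T x.
Proof.
move=> ST [c [c_ge0 ->]]; exists (fun i => if i \in S then c i else 0); split.
  by move=> i; case: ifP.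
rewrite [RHS]big_mkcond [LHS]big_mkcond; apply: eq_bigr => i _.
have [iS|iS] := boolP (i \in S); first by rewrite (subsetP ST _ iS).
by rewrite scale0r; case: ifP.
Qed.

Lemma pos_cone0 (x : 'rV[R]_n) : pos_cone u set0 x -> x = 0.
Proof. by case=> c [_ ->]; rewrite big_set0. Qed.

Lemma dual_coord (T S : {set I}) (lam : I -> 'rV[R]_n) (z : I -> I -> int)
    (c : I -> R) t :
  (forall t i, pair (lam t) (ur i) = (z t i)%:~R) ->
  (forall t t', t \in T -> t' \in T -> z t t' = (t == t')%:R) ->
  S \subset T -> t \in S -> pair (lam t) (\sum_(i in S) c i *: ur i) = c t.
Proof.
move=> lamE z_T ST tS; rewrite pair_sum (bigD1 t) //= pairZ lamE z_T ?(subsetP ST) //.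
rewrite eqxx mulr1 big1 ?addr0 // => i /andP[iS it].
by rewrite pairZ lamE z_T ?(subsetP ST) // eq_sym (negbTE it) mulr0.
Qed.

Lemma integral_conic_relation j (c : I -> R) : (forall i, 0 <= c i) -> c j = 0 ->
  lin_indep_on ur (supp c) -> ur j = \sum_i c i *: ur i ->
  exists N : nat, exists m : I -> nat,
    [/\ (0 < N)%N, m j = 0%N & N%:R *: ur j = \sum_i (m i)%:R *: ur i].
Proof.
move=> c_ge0 cj indc E.
have [q cq] := lin_indep_coord_rat indc (etrans E (esym (sum_supp _ _))).
pose q' i := if i \in supp c then q i else 0.
have cq' i : c i = ratr (q' i).
  by rewrite /q'; case: ifPn => [/cq //|]; rewrite inE negbK rmorph0 => /eqP.
have q'_ge0 i : 0 <= q' i by rewrite -(ler0q R) -cq'.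
have [N [m [N_gt0 Nm]]] := rat_common_denom q'_ge0.
exists N, m; split => //.
  have := Nm j; rewrite /q' inE cj eqxx mulr0 => /esym/eqP.
  by rewrite pnatr_eq0 => /eqP.
rewrite E scaler_sumr; apply: eq_bigr => i _.
by rewrite scalerA cq' -(ratr_nat R N) -rmorphM Nm rmorph_nat.
Qed.

End Lattice.

Section SmoothCompleteFan.
Variables (R : realType) (n : nat) (I : finType) (u : I -> 'rV[int]_n).
Variable cones : {set {set I}}.
Hypothesis fanX : smooth_complete_fan R u cones.
Local Notation ur := (ur R u).

Lemma cone1 i : [set i] \in cones.
Proof. by case: fanX. Qed.

Lemma coneS (S T : {set I}) : T \in cones -> S \subset T -> S \in cones.
Proof. by case: fanX => _ [coneS _]; apply: coneS. Qed.

Lemma pos_coneI (S T : {set I}) (x : 'rV[R]_n) : S \in cones -> T \in cones ->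
  pos_cone u S x -> pos_cone u T x -> pos_cone u (S :&: T) x.
Proof. by case: fanX => _ [_ [coneI _]] Sc Tc xS xT; apply/(coneI _ _ Sc Tc). Qed.

Lemma cone_Zbasis (S : {set I}) : S \in cones ->
  exists2 T : {set I}, T \in cones & S \subset T /\ Zbasis u T.
Proof. by case: fanX => _ [_ [_ [coneZ _]]]; apply: coneZ. Qed.

Lemma fan_cover (x : 'rV[R]_n) : exists2 S : {set I}, S \in cones & pos_cone u S x.
Proof. by case: fanX => _ [_ [_ [_ cover]]]. Qed.

Lemma cone_lin_indep (S : {set I}) : S \in cones -> lin_indep_on ur S.
Proof.
move=> /cone_Zbasis[T _ [ST /(Zbasis_dual R)[lam [z [lamE z_T _]]]]] d d0 i iS.
by rewrite -(dual_coord d lamE z_T ST iS) d0 pair0.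
Qed.

Lemma ur_neq0 j : ur j != 0.
Proof.
apply/eqP => uj0; have := @cone_lin_indep _ (cone1 j) (fun=> 1).
by rewrite big_set1 uj0 scaler0 => /(_ erefl j (set11 j))/eqP; rewrite oner_eq0.
Qed.

Lemma ray_notin_cone (S : {set I}) j (k : R) : S \in cones -> j \notin S -> 0 < k ->
  ~ pos_cone u S (k *: ur j).
Proof.
move=> Sc jS k_gt0 kjS.
have kj : pos_cone u [set j] (k *: ur j).
  by have := @pos_cone_sum _ _ _ u [set j] (fun=> k) (fun _ _ => ltW k_gt0); rewrite big_set1.
have Sj0 : S :&: [set j] = set0.
  by apply/setP => i; rewrite !inE andbC; case: eqP => // ->; apply: negbTE.
have := pos_coneI Sc (cone1 j) kjS kj; rewrite Sj0 => /pos_cone0/eqP.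
by rewrite scaler_eq0 gt_eqF //= (negbTE (ur_neq0 j)).
Qed.

Lemma sum_in_cone_sub (S T : {set I}) : S \in cones -> T \in cones ->
  pos_cone u T (\sum_(i in S) ur i) -> S \subset T.
Proof.
move=> Sc Tc xT.
have xS : pos_cone u S (\sum_(i in S) ur i).
  have := @pos_cone_sum R _ _ u S (fun=> 1) (fun _ _ => ler01).
  by under eq_bigr do rewrite scale1r.
have [c [_ xE]] := pos_coneI Sc Tc xS xT.
apply/subsetP => i iS; apply: contraT => iT.
have := lin_indep_coord_uniq (c := fun=> 1) (c' := fun i => if i \in T then c i else 0)
  (cone_lin_indep Sc) _ iS; rewrite (negbTE iT) => /(_ _)/eqP; rewrite oner_eq0; apply.
under eq_bigr do rewrite scale1r; rewrite xE big_mkcond [RHS]big_mkcond.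
by apply: eq_bigr => k _; rewrite inE; case: (k \in S); case: (k \in T); rewrite ?scale0r.
Qed.

Lemma maximal_cone_Zbasis (s : {set I}) : maximal_cone cones s -> Zbasis u s.
Proof.
case/andP=> sc /forall_inP s_max; have [T Tc [sT zT]] := cone_Zbasis sc.
by have /implyP/(_ sT)/eqP <- := s_max T Tc.
Qed.

Lemma primitive_card_gt1 (Q : {set I}) : primitive_set cones Q -> (1 < #|Q|)%N.
Proof.
case=> Qn _; rewrite ltnNge; apply: contra Qn => /card_le1_eqP Q_le1.
have [->|[q qQ]] := set_0Vmem Q.
  by have [S Sc _] := fan_cover 0; apply: coneS Sc (sub0set S).
suff -> : Q = [set q] by apply: cone1.
by apply/setP => i; rewrite inE; apply/idP/eqP => [iQ|->]; first exact: Q_le1.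
Qed.

End SmoothCompleteFan.

Section PrimitiveRelations.
Variables (R : realType) (n : nat) (I : finType) (u : I -> 'rV[int]_n).
Variable cones : {set {set I}}.
Hypotheses (fanX : smooth_complete_fan R u cones)
  (FanoV : all_toric_subvarieties_Fano R u cones).
Local Notation ur := (ur R u).

Section MaximalCone.
Variables (s : {set I}) (lam : I -> 'rV[R]_n) (z : I -> I -> int).
Hypotheses (max_s : maximal_cone cones s)
  (lamE : forall t i, pair (lam t) (ur i) = (z t i)%:~R)
  (z_s : forall t t', t \in s -> t' \in s -> z t t' = (t == t')%:R)
  (expand_s : forall x, x = \sum_(t in s) pair (lam t) x *: ur t).

Let s_cone : s \in cones := (andP max_s).1.

(* The Fano condition on V(tau), tested at the maximal cone s, bounds the
   s-coordinates of any ray q adjacent to tau but outside s. *)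
Lemma star_coord_le0 (tau : {set I}) q : tau \subset s -> q |: tau \in cones ->
  q \notin s -> \sum_(t in s | t \notin tau) z t q <= 0.
Proof.
move=> tau_s q_tau qs.
have [m [m_tau [m_s m_lt1]]] := FanoV (coneS fanX s_cone tau_s) max_s tau_s.
have := m_lt1 q q_tau qs; rewrite [ur q]expand_s pair_sum.
rewrite (eq_bigr (fun t => if t \notin tau then (z t q)%:~R else 0)) => [|t ts]; last first.
  rewrite pairZ lamE; have [t_tau|t_tau] := boolP (t \in tau); first by rewrite m_tau ?mulr0.
  by rewrite m_s ?mulr1.
by rewrite -big_mkcondr -rmorph_sum ltrz1 -ltzD1 add0r; apply.
Qed.

Section Primitive.
Variable Q : {set I}.
Hypotheses (primQ : primitive_set cones Q) (Q_in_s : pos_cone u s (\sum_(i in Q) ur i)).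

Let a t := \sum_(q in Q) z t q.

Lemma pair_sum_primitive t : pair (lam t) (\sum_(i in Q) ur i) = (a t)%:~R.
Proof. by rewrite pair_sum /a rmorph_sum; apply: eq_bigr => i _; apply: lamE. Qed.

Lemma sum_primitive_coord : \sum_(i in Q) ur i = \sum_(t in s) (a t)%:~R *: ur t.
Proof. by rewrite {1}[LHS]expand_s; apply: eq_bigr => t _; rewrite pair_sum_primitive. Qed.

Lemma primitive_coord_ge0 t : t \in s -> 0 <= a t.
Proof.
case: Q_in_s => c [c_ge0 cE] ts; rewrite -(ler_int R) -pair_sum_primitive cE.
by rewrite (dual_coord c lamE z_s (subxx s) ts).
Qed.

Lemma primitive_not_sub : ~~ (Q \subset s).
Proof. by apply: contra _ primQ.1 => Qs; apply: (coneS fanX s_cone Qs). Qed.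

(* Otherwise the sum over [Q :\ p] would lie in [s], forcing [Q \subset s]. *)
Lemma primitive_coord_in p : p \in Q -> p \in s -> a p = 0.
Proof.
move=> pQ ps; apply: contraTeq primitive_not_sub; rewrite negbK => ap0.
have ap1 : 1 <= a p by have := primitive_coord_ge0 ps; lia.
have Qp_cone : Q :\ p \in cones by apply: primQ.2; rewrite properD1.
have Qp_s : Q :\ p \subset s.
  apply: (sum_in_cone_sub fanX Qp_cone s_cone).
  have -> : \sum_(i in Q :\ p) ur i = \sum_(t in s) ((a t)%:~R - (t == p)%:R) *: ur t.
    apply/esym; under eq_bigr do rewrite scalerBl.
    rewrite sumrB sum_delta_scale // -sum_primitive_coord (big_setD1 p) //=.
    by rewrite [ur p + _]addrC addrK.
  apply: (pos_cone_sum u) => t ts; rewrite subr_ge0.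
  have [->|_] := eqVneq t p; first by rewrite ler1z.
  by rewrite ler0z primitive_coord_ge0.
apply/subsetP => i iQ.
by have [->//|ip] := eqVneq i p; apply: (subsetP Qp_s); rewrite !inE ip.
Qed.

Lemma primitive_coord_split t : t \in s ->
  a t = \sum_(q in Q | q \notin s) z t q + (t \in Q)%:R.
Proof.
move=> ts; rewrite /a (bigID (mem s)) /= addrC; congr (_ + _).
have [tQ|tQ] := boolP (t \in Q).
  rewrite (bigD1 t) ?tQ ?ts //= z_s // eqxx big1 ?addr0 // => q /andP[/andP[_ qs] qt].
  by rewrite z_s // eq_sym (negbTE qt).
rewrite big1 // => q /andP[qQ qs]; rewrite z_s //.
by case: eqP tQ => // ->; rewrite qQ.
Qed.

Lemma primitive_coord_out_le0 q1 q2 : q1 \in Q :\: s -> q2 \in Q :\: s -> q1 != q2 ->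
  \sum_(t in s | t \notin Q) a t <= 0.
Proof.
rewrite !inE => /andP[q1s q1Q] /andP[q2s q2Q] q12.
have star q : q \in Q -> q \notin s -> \sum_(t in s | t \notin Q) z t q <= 0.
  move=> qQ qs.
  have [q' q'Q q'q] : exists2 q', q' \in Q :\: s & q' != q.
    have [->|qq1] := eqVneq q q1; [exists q2 | exists q1];
      by rewrite ?inE ?q1s ?q2s // eq_sym.
  have q_tau : q |: (Q :&: s) \in cones.
    apply: primQ.2; rewrite properE; apply/andP; split.
      by apply/subsetP => i; rewrite !inE => /orP[/eqP->|/andP[]].
    move: q'Q; rewrite inE => /andP[q's q'Q].
    by apply/subsetPn; exists q' => //; rewrite !inE (negbTE q'q) (negbTE q's) andbF.
  have := star_coord_le0 (subsetIr Q s) q_tau qs; congr (_ <= 0).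
  by apply: eq_bigl => t; rewrite inE negb_and; case: (t \in s); rewrite ?orbF.
rewrite (eq_bigr (fun t => \sum_(q in Q | q \notin s) z t q)); last first.
  by move=> t /andP[ts tQ]; rewrite primitive_coord_split // (negbTE tQ) addr0.
by rewrite exchange_big /=; apply: sumr_le0 => q /andP[qQ qs]; apply: star.
Qed.

Lemma primitive_coord_out_le1 q1 : Q :\: s = [set q1] ->
  \sum_(t in s | t \notin Q) a t <= 1.
Proof.
move=> Qs1; have /setDP[q1Q q1s] : q1 \in Q :\: s by rewrite Qs1 set11.
have [p pQ pq1] : exists2 p, p \in Q & p != q1.
  have := primitive_card_gt1 fanX primQ; rewrite (cardsD1 q1) q1Q ltnS card_gt0.
  by case/set0Pn => p; rewrite !inE => /andP[pq1 pQ]; exists p.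
have ps : p \in s.
  apply: contraT => ps; have : p \in Q :\: s by rewrite inE ps pQ.
  by rewrite Qs1 inE (negbTE pq1).
pose tau := (Q :&: s) :\ p.
have tau_s : tau \subset s by apply/subsetP => i; rewrite !inE => /and3P[].
have q1_tau : q1 |: tau \in cones.
  apply: primQ.2; rewrite properE; apply/andP; split.
    by apply/subsetP => i; rewrite !inE => /orP[/eqP->|/and3P[]].
  by apply/subsetPn; exists p; rewrite // !inE eqxx (negbTE pq1).
have zq1 t : t \in s -> z t q1 = a t - (t \in Q)%:R.
  move=> ts; rewrite primitive_coord_split // addrK (eq_bigl (pred1 q1)) ?big_pred1_eq // => q.
  by rewrite andbC -in_setD Qs1 inE.
have := star_coord_le0 tau_s q1_tau q1s.
rewrite (bigD1 p) /=; last by rewrite ps !inE eqxx.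
rewrite zq1 // primitive_coord_in // pQ.
rewrite (eq_bigl (fun t => (t \in s) && (t \notin Q))) => [|t]; last first.
  rewrite !inE; have [->|tp] := eqVneq t p; first by rewrite ps pQ.
  by case: (t \in s); case: (t \in Q).
rewrite (eq_bigr a) => [|t /andP[ts /negbTE tQ]]; last by rewrite zq1 // tQ subr0.
by rewrite sub0r addrC subr_le0; apply.
Qed.

Lemma primitive_coord_sum_le1 : \sum_(t in s) a t <= 1.
Proof.
rewrite (bigID (mem Q)) /= big1 ?add0r => [|t /andP[ts tQ]]; last exact: primitive_coord_in.
have /set0Pn[q1 q1Qs] : Q :\: s != set0 by rewrite setD_eq0 primitive_not_sub.
have [/exists_inP[q2 q2Qs q21]|] := boolP [exists q2 in Q :\: s, q2 != q1].
  by apply: le_trans (primitive_coord_out_le0 q1Qs q2Qs _) _; rewrite // eq_sym.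
rewrite negb_exists_in => /forall_inP Qs1; apply: (primitive_coord_out_le1 (q1 := q1)).
by apply/setP => q; rewrite inE; apply/idP/eqP => [/Qs1/negbNE/eqP|->].
Qed.

Lemma primitive_sum_cases : \sum_(i in Q) ur i = 0 \/ exists y, \sum_(i in Q) ur i = ur y.
Proof.
rewrite sum_primitive_coord.
have [a0|[y ys ay]] := int_sum_le1 primitive_coord_ge0 primitive_coord_sum_le1.
  by left; rewrite big1 // => t ts; rewrite a0 // scale0r.
right; exists y; rewrite -(sum_delta_scale _ ys); apply: eq_bigr => t ts.
by rewrite ay //; case: (t == y).
Qed.

End Primitive.
End MaximalCone.

Lemma primitive_sum_zero_or_ray (Q : {set I}) : primitive_set cones Q ->
  \sum_(i in Q) ur i = 0 \/ exists y, \sum_(i in Q) ur i = ur y.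
Proof.
move=> primQ; have [S0 S0c xS0] := fan_cover fanX (\sum_(i in Q) ur i).
have [s max_s S0s] := maximal_cone_exists S0c.
have [lam [z [lamE z_s expand_s]]] := Zbasis_dual R (maximal_cone_Zbasis fanX max_s).
exact: (primitive_sum_cases max_s lamE z_s expand_s primQ (pos_cone_sub S0s xS0)).
Qed.

Lemma nat_relation_supp_notin j N (m : I -> nat) : (0 < N)%N -> m j = 0%N ->
  N%:R *: ur j = \sum_i (m i)%:R *: ur i -> supp (fun i => (m i)%:R : R) \notin cones.
Proof.
move=> N_gt0 mj E; apply/negP => Sc.
apply: (ray_notin_cone fanX Sc (j := j) (k := N%:R)); rewrite ?inE ?mj ?eqxx ?ltr0n //.
by rewrite E -sum_supp; apply: (pos_cone_sum u) => i _; apply: ler0n.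
Qed.

Lemma primitive_exchange (Q : {set I}) (m e : I -> nat) :
  (forall i, i \in Q -> 0 < m i)%N -> (\sum_i e i < #|Q|)%N ->
  \sum_(i in Q) ur i = \sum_i (e i)%:R *: ur i ->
  exists m' : I -> nat, [/\ forall i, i \notin Q -> e i = 0%N -> m' i = m i,
    (\sum_i m' i < \sum_i m i)%N & \sum_i (m' i)%:R *: ur i = \sum_i (m i)%:R *: ur i].
Proof.
move=> m_gt0 e_lt Qe.
have mQ i : ((i \in Q) <= m i)%N by case: (boolP (i \in Q)) => // /m_gt0.
exists (fun i => m i - (i \in Q) + e i)%N; split.
- by move=> i /negbTE -> ->; rewrite subn0 addn0.
- have : (\sum_i (m i - (i \in Q)) + \sum_i (i \in Q : nat) = \sum_i m i)%N.
    by rewrite -big_split; apply: eq_bigr => i _; apply: subnK.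
  by rewrite big_split sum_mem_card /=; lia.
- under eq_bigr => i _ do rewrite natrD natrB // scalerDl scalerBl.
  rewrite big_split sumrB /= -Qe.
  suff -> : \sum_i (i \in Q)%:R *: ur i = \sum_(i in Q) ur i by rewrite subrK.
  by rewrite [RHS]big_mkcond; apply: eq_bigr => i _; case: (i \in Q); rewrite ?scale1r ?scale0r.
Qed.

Lemma nat_relation_step j N (m : I -> nat) : (0 < N)%N -> m j = 0%N ->
  N%:R *: ur j = \sum_i (m i)%:R *: ur i ->
  exceptional u cones j \/ exists m' : I -> nat,
    [/\ m' j = 0%N, (\sum_i m' i < \sum_i m i)%N & N%:R *: ur j = \sum_i (m' i)%:R *: ur i].
Proof.
move=> N_gt0 mj E.
have [Q QS primQ] := primitive_subset_exists (nat_relation_supp_notin N_gt0 mj E).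
have m_gt0 i : i \in Q -> (0 < m i)%N by move/(subsetP QS); rewrite inE pnatr_eq0 lt0n.
have jQ : j \notin Q by apply/negP => /m_gt0; rewrite mj.
have exchange (e : I -> nat) : e j = 0%N -> (\sum_i e i <= 1)%N ->
    \sum_(i in Q) ur i = \sum_i (e i)%:R *: ur i -> exists m' : I -> nat,
    [/\ m' j = 0%N, (\sum_i m' i < \sum_i m i)%N & N%:R *: ur j = \sum_i (m' i)%:R *: ur i].
  move=> ej e_le1 Qe.
  have e_lt : (\sum_i e i < #|Q|)%N := leq_ltn_trans e_le1 (primitive_card_gt1 fanX primQ).
  have [m' [m'E lt' E']] := primitive_exchange m_gt0 e_lt Qe.
  by exists m'; rewrite m'E // E E'.
have [Q0|[y Qy]] := primitive_sum_zero_or_ray primQ.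
  right; apply: (exchange (fun=> 0%N)) => //; first by rewrite big1.
  by rewrite Q0 big1 // => i _; rewrite scale0r.
have [yj|yj] := eqVneq y j.
  by left; exists Q; split => //; apply: (ur_sum_inj (R := R)); rewrite Qy yj.
right; apply: (exchange (fun i => i == y)); first by rewrite eq_sym (negbTE yj).
  by rewrite (bigD1 y) //= eqxx big1 // => i /negbTE ->.
by rewrite Qy sum_delta_scale.
Qed.

Lemma exceptional_of_nat_relation j N (m : I -> nat) : (0 < N)%N -> m j = 0%N ->
  N%:R *: ur j = \sum_i (m i)%:R *: ur i -> exceptional u cones j.
Proof.
move=> N_gt0; elim: {m}_.+1 {-2}m (ltnSn (\sum_i m i)) => // k IH m lt_k mj E.
have [//|[m' [m'j lt' E']]] := nat_relation_step N_gt0 mj E.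
exact: IH m' (leq_trans lt' (ltnSE lt_k)) m'j E'.
Qed.

End PrimitiveRelations.

Theorem lemma3p3 (R : realType) (n : nat) (I : finType) (u : I -> 'rV[int]_n)
    (cones : {set {set I}}) :
  smooth_complete_fan R u cones ->
  Fano R u cones ->
  all_toric_subvarieties_Fano R u cones ->
  forall (j : I) (c : I -> R),
    (forall i, 0 <= c i) ->
    ur R u j = \sum_(i | i != j) c i *: ur R u i ->
    exceptional u cones j.
Proof.
move=> fanX _ FanoV j c c_ge0 E.
pose c0 i := if i == j then 0 else c i.
have c0_ge0 i : 0 <= c0 i by rewrite /c0; case: ifP.
have E0 : ur R u j = \sum_i c0 i *: ur R u i.
  by rewrite E big_mkcond; apply: eq_bigr => i _; rewrite /c0; case: eqP; rewrite ?scale0r.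
have [c1 [c1_ge0 c1_c0 E1 indc1]] := conic_caratheodory (ur R u) c0_ge0.
have c1j : c1 j = 0.
  apply/eqP; apply: contraNT (_ : j \notin supp c0) => [c1j|]; last by rewrite inE /c0 !eqxx.
  by apply: (subsetP c1_c0); rewrite inE.
have [N [m [N_gt0 mj Em]]] := integral_conic_relation c1_ge0 c1j indc1 (etrans E0 (esym E1)).
exact: (exceptional_of_nat_relation fanX FanoV N_gt0 mj Em).
Qed.
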